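(* Let $Y=\mathbf{F}_e$ and let $A\equiv C_0+bf$ be a very ample divisor on $Y$. Let $P_1,\dots,P_r$ be $r$ distinct points of $Y$, no two on the same fibre, and let $F=\{f_1,\dots,f_r\}$ where $f_i=\rho^*(\rho(P_i))$ is the fibre through $P_i$. If $h^0(Y,A)\ge2r$, then for any fixed finite set $\Phi$ of fibres with $\Phi\cap F=\emptyset$ there exists at least one element $\gamma\in|A|$ which passes through $P_1,\dots,P_r$, is smooth at each $P_i$, and intersects every fibre of $\Phi$ transversely.
   Context: $\mathbf{F}_e=\mathbb{P}(\mathcal{O}_{\mathbb{P}^1}\oplus\mathcal{O}_{\mathbb{P}^1}(-e))$, $e\ge0$, with ruling $\rho:\mathbf{F}_e\to\mathbb{P}^1$; $C_0$ ($C_0^2=-e$) and $f$ (fibre class) are the standard generators of $\mathrm{Pic}(\mathbf{F}_e)$. *)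

(* Concrete Cox-coordinate model of the Hirzebruch surface
   F_e = P(O + O(-e)) over a field k:
     F_e = ((k^2 \ 0) x (k^2 \ 0)) / (k^* )^2,
     (lam,mu).(x0,x1,y0,y1) = (lam x0, lam x1, mu y0, lam^e mu y1),
   ruling rho [x0:x1:y0:y1] = [x0:x1] in P^1.
   A point is represented by (x, y) with x = (x0,x1) <> 0, y = (y0,y1) <> 0.
   Global sections of O(C_0 + b f) are the bihomogeneous forms
     s = y0 * g(x0,x1) + y1 * h(x0,x1),  deg g = b, deg h = b - e,
   (H^0 = H^0(P^1,O(b)) + H^0(P^1,O(b-e))); the curve {y0 = 0} is C_0. *)
From mathcomp Require Import all_boot all_order all_algebra.
Set Implicit Arguments. Unset Strict Implicit. Unset Printing Implicit Defensive.
Import GRing.Theory.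
Local Open Scope ring_scope.

Section Hirzebruch.
Variable k : fieldType.

Definition bform (n : nat) (c : 'I_n.+1 -> k) (x0 x1 : k) : k :=
  \sum_(i < n.+1) c i * x0 ^+ i * x1 ^+ (n - i).
Definition bform_d0 (n : nat) (c : 'I_n.+1 -> k) (x0 x1 : k) : k :=
  \sum_(i < n.+1) (c i *+ i) * x0 ^+ i.-1 * x1 ^+ (n - i).
Definition bform_d1 (n : nat) (c : 'I_n.+1 -> k) (x0 x1 : k) : k :=
  \sum_(i < n.+1) (c i *+ (n - i)) * x0 ^+ i * x1 ^+ (n - i).-1.

Variables (e b : nat).
Variables (g : 'I_b.+1 -> k) (h : 'I_(b - e).+1 -> k).

Definition sec_eval (x y : k * k) : k :=
  y.1 * bform g x.1 x.2 + y.2 * bform h x.1 x.2.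
Definition sec_dx0 (x y : k * k) : k :=
  y.1 * bform_d0 g x.1 x.2 + y.2 * bform_d0 h x.1 x.2.
Definition sec_dx1 (x y : k * k) : k :=
  y.1 * bform_d1 g x.1 x.2 + y.2 * bform_d1 h x.1 x.2.
Definition sec_dy0 (x y : k * k) : k := bform g x.1 x.2.
Definition sec_dy1 (x y : k * k) : k := bform h x.1 x.2.

Definition nonzero_section : Prop :=
  (exists i, g i != 0) \/ (exists j, h j != 0).

(* the curve gamma = div(s) passes through the point [x:y] and is smooth
   there: s vanishes and its differential (in Cox coordinates, via the
   smooth torus-quotient map) is nonzero *)
Definition smooth_at (x y : k * k) : Prop :=
  sec_eval x y = 0 /\
  ~ [/\ sec_dx0 x y = 0, sec_dx1 x y = 0, sec_dy0 x y = 0 & sec_dy1 x y = 0].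

(* gamma meets the fibre rho^{-1}([t0:t1]) transversely: at every point of
   gamma on that fibre, the restriction of s to the fibre (coordinates y)
   has a simple zero, i.e. nonzero derivative along the fibre.  (If the
   fibre lies in gamma this fails.) *)
Definition transverse_fibre (t : k * k) : Prop :=
  forall y : k * k, y != (0, 0) -> sec_eval t y = 0 ->
    (sec_dy0 t y, sec_dy1 t y) != (0, 0).

End Hirzebruch.

Definition same_fibre (k : fieldType) (x x' : k * k) : bool :=
  x.1 * x'.2 == x.2 * x'.1.

(* h^0(F_e, O(C_0 + b f)) = (b+1) + (b-e+1) for b >= e *)
Definition h0_A (e b : nat) : nat := (b.+1 + (b - e).+1)%N.

(* Write a section of O(C_0 + b f) as y0 G(x) + y1 H(x) with binary forms G
   and H of degrees b and b - e, and split the points according to whether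
   they lie on C_0 = {y0 = 0}.  If at most b - e of them do, let H vanish
   exactly on their fibres and on one auxiliary fibre avoiding all the given
   ones, and choose G by interpolation on the r <= b + 1 distinct fibres so
   that the section vanishes at every P_i; it is smooth there through its
   y0-derivative G on C_0 and its y1-derivative H off C_0.  Otherwise 2r <= h^0 leaves at
   most e/2 < b points off C_0; take H = 0 and G a product of linear forms
   with a simple zero on each of their fibres, so the section is smooth
   through its x-derivatives off C_0 and through G on C_0.  In both cases the
   form multiplying the relevant y-coordinate does not vanish on the fibres
   of Phi, which gives transversality. *)

From mathcomp Require Import all_boot all_order all_algebra ring zify.
Set Implicit Arguments.
Unset Strict Implicit.
Unset Printing Implicit Defensive.

Import GRing.Theory.
Local Open Scope ring_scope.

Section BinaryForms.
Variable k : fieldType.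
Implicit Types (p q : {poly k}) (x y z w : k * k) (s : seq (k * k)).

(* A polynomial [p] of size at most [n.+1] stands for its homogenisation of
   degree [n]. *)
Definition coefs n p : 'I_n.+1 -> k := fun i => p`_i.
Arguments coefs : clear implicits.
Definition homog n p x : k := bform (coefs n p) x.1 x.2.

Lemma homog0 n x : homog n 0 x = 0.
Proof. by rewrite /homog /bform big1 // => i _; rewrite /coefs coef0 !mul0r. Qed.

Lemma homogD n p q x : homog n (p + q) x = homog n p x + homog n q x.
Proof.
by rewrite /homog /bform -big_split; apply: eq_bigr => i _; rewrite /coefs coefD !mulrDl.
Qed.

Lemma homogZ n c p x : homog n (c *: p) x = c * homog n p x.
Proof.
by rewrite /homog /bform mulr_sumr; apply: eq_bigr => i _; rewrite /coefs coefZ !mulrA.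
Qed.

Lemma homog_sum n (I : finType) (F : I -> {poly k}) x :
  homog n (\sum_i F i) x = \sum_i homog n (F i) x.
Proof. exact: (big_morph (homog n ^~ x) (fun p q => homogD n p q x) (homog0 n x)). Qed.

Lemma homog1 y : homog 0 1 y = 1.
Proof. by rewrite /homog /bform big_ord1 /coefs coef1 /= !expr0 !mulr1. Qed.

Lemma homog_x1_eq0 n p u0 : homog n p (u0, 0) = p`_n * u0 ^+ n.
Proof.
rewrite /homog /bform /= big_ord_recr /= subnn expr0 mulr1 big1 ?add0r // => i _.
by rewrite expr0n subn_eq0 leqNgt ltn_ord mulr0.
Qed.

Lemma homog_affine n p u0 u1 : u1 != 0 -> (size p <= n.+1)%N ->
  homog n p (u0, u1) = u1 ^+ n * p.[u0 / u1].
Proof.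
move=> u1_neq0 size_p; rewrite /homog /bform /= (horner_coef_wide _ size_p) mulr_sumr.
apply: eq_bigr => i _; rewrite exprMn exprVn (exprB (ltnSE (ltn_ord i))) ?unitfE //.
by rewrite /coefs; ring.
Qed.

Lemma coefM_top n1 n2 p q : (size p <= n1.+1)%N -> (size q <= n2.+1)%N ->
  (p * q)`_(n1 + n2) = p`_n1 * q`_n2.
Proof.
move=> size_p size_q; rewrite coefM (bigD1 (@Ordinal (n1 + n2).+1 n1 (leq_addr n2 n1))) //=.
rewrite addKn big1 ?addr0 // => j /eqP j_neq; have [lt_j_n1|le_n1_j] := ltnP j n1.
  by rewrite [q`__]nth_default ?mulr0 //; apply: leq_trans size_q _; lia.
rewrite [p`__]nth_default ?mul0r //; apply: leq_trans size_p _.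
have : nat_of_ord j != n1 by apply/eqP => j_n1; apply: j_neq; apply: val_inj.
lia.
Qed.

Lemma homogM n1 n2 p q x : (size p <= n1.+1)%N -> (size q <= n2.+1)%N ->
  homog (n1 + n2) (p * q) x = homog n1 p x * homog n2 q x.
Proof.
move=> size_p size_q; case: x => u0 u1; have [->|u1_neq0] := eqVneq u1 0.
  by rewrite !homog_x1_eq0 (coefM_top size_p size_q) exprD; ring.
have size_pq : (size (p * q)%R <= (n1 + n2).+1)%N.
  by apply: leq_trans (size_polyMleq _ _) _; lia.
by rewrite !homog_affine // hornerM exprD; ring.
Qed.

Lemma coefs_neq0 n p : (size p <= n.+1)%N -> p != 0 -> exists i, coefs n p i != 0.
Proof.
move=> size_p p_neq0; have lt_deg_n : ((size p).-1 < n.+1)%N.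
  by move: p_neq0; rewrite -size_poly_eq0; lia.
by exists (Ordinal lt_deg_n); rewrite /coefs /= -lead_coefE lead_coef_eq0.
Qed.

Definition lin z : {poly k} := z.2 *: 'X - z.1%:P.

Lemma size_lin z : (size (lin z) <= 2)%N.
Proof.
apply: leq_trans (size_polyD _ _) _; rewrite geq_max size_polyN size_polyC.
by rewrite (leq_trans (size_scale_leq _ _)) ?size_polyX // (leq_trans (leq_b1 _)).
Qed.

Lemma size_lin_mul n z q : (size q <= n.+1)%N -> (size (lin z * q)%R <= n.+2)%N.
Proof.
by move=> size_q; apply: leq_trans (size_polyMleq _ _) _; have := size_lin z; lia.
Qed.

Lemma homog_lin z y : homog 1 (lin z) y = z.2 * y.1 - z.1 * y.2.
Proof.
rewrite /homog /bform big_ord_recr big_ord1 /= /coefs /lin.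
rewrite !coefB !coefZ !coefX !coefC /= !expr0 !expr1; ring.
Qed.

Lemma homog_lin_eq0 z y : (homog 1 (lin z) y == 0) = same_fibre y z.
Proof. by rewrite homog_lin subr_eq0 /same_fibre mulrC [z.1 * _]mulrC. Qed.

Lemma lin_neq0 z : z != (0, 0) -> lin z != 0.
Proof.
case: z => z0 z1; apply: contra => /eqP lin0; have := congr1 (coefp 0) lin0.
have := congr1 (coefp 1) lin0; rewrite /= !coefB !coefZ !coefX !coefC /=.
by rewrite mulr1 mulr0 subr0 sub0r => -> /eqP; rewrite oppr_eq0 => /eqP ->.
Qed.

Lemma same_fibre_refl x : same_fibre x x.
Proof. by rewrite /same_fibre mulrC. Qed.

Definition fibre_form s : {poly k} := \prod_(z <- s) lin z.

Lemma fibre_form_size_homog s y :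
  (size (fibre_form s) <= (size s).+1)%N /\
  homog (size s) (fibre_form s) y = \prod_(z <- s) homog 1 (lin z) y.
Proof.
rewrite /fibre_form; elim: s => [|z s [size_s homog_s]].
  by rewrite !big_nil size_poly1 homog1.
rewrite !big_cons -[size (z :: s)]/(1 + size s)%N homogM ?size_lin // homog_s.
by split=> //; apply: size_lin_mul.
Qed.

Lemma size_fibre_form s : (size (fibre_form s) <= (size s).+1)%N.
Proof. by case: (fibre_form_size_homog s (0, 0)). Qed.

Lemma homog_fibre_form_eq0 s y :
  (homog (size s) (fibre_form s) y == 0) = has (same_fibre y) s.
Proof.
have [_ ->] := fibre_form_size_homog s y; rewrite prodf_seq_eq0.
by apply: eq_has => z; rewrite homog_lin_eq0.
Qed.

Lemma fibre_form_neq0 s : (forall z, z \in s -> z != (0, 0)) -> fibre_form s != 0.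
Proof.
by move=> s_neq0; rewrite prodf_seq_neq0; apply/allP => z /s_neq0 /lin_neq0.
Qed.

(* Padding with copies of a point [w] off the relevant fibres raises the
   degree of a fibre form without adding zeros there. *)
Definition pad n w s := s ++ nseq (n - size s) w.

Lemma size_pad n w s : (size s <= n)%N -> size (pad n w s) = n.
Proof. by rewrite size_cat size_nseq; lia. Qed.

Lemma size_fibre_form_pad n w s : (size s <= n)%N ->
  (size (fibre_form (pad n w s)) <= n.+1)%N.
Proof. by move=> le_s_n; rewrite -{2}(size_pad w le_s_n) size_fibre_form. Qed.

Lemma homog_pad_eq0 n w s y : (size s <= n)%N -> ~~ same_fibre y w ->
  (homog n (fibre_form (pad n w s)) y == 0) = has (same_fibre y) s.
Proof.
move=> le_s_n y_w; rewrite -{1}(size_pad w le_s_n) homog_fibre_form_eq0.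
by rewrite has_cat has_nseq (negbTE y_w) andbF orbF.
Qed.

Lemma size_deriv_leq p : (size p^`() <= (size p).-1)%N.
Proof. exact: size_poly. Qed.

Lemma bform_d0_homog n p u0 u1 :
  bform_d0 (coefs n.+1 p) u0 u1 = homog n p^`() (u0, u1).
Proof.
rewrite /bform_d0 big_ord_recl /= mulr0n !mul0r add0r /homog /bform.
by apply: eq_bigr => i _; rewrite /coefs coef_deriv /= subSS.
Qed.

Lemma bform_const0 n : let c0 := fun _ : 'I_n.+1 => 0 : k in
  [/\ forall u0 u1, bform c0 u0 u1 = 0, forall u0 u1, bform_d0 c0 u0 u1 = 0
     & forall u0 u1, bform_d1 c0 u0 u1 = 0].
Proof.
by split=> u0 u1; rewrite /bform /bform_d0 /bform_d1 big1 // => i _; rewrite ?mul0rn !mul0r.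
Qed.

Lemma bform_d1_x1_eq0 n p u0 : bform_d1 (coefs n.+1 p) u0 0 = p`_n * u0 ^+ n.
Proof.
rewrite /bform_d1 big_ord_recr /= subnn mulr0n !mul0r addr0.
rewrite big_ord_recr /= subSnn expr0 mulr1 mulr1n big1 ?add0r // => i _.
rewrite expr0n; have -> : ((n.+1 - i).-1 == 0)%N = false by have := ltn_ord i; lia.
by rewrite mulr0.
Qed.

Lemma lin_mul_nonsingular n x q : x != (0, 0) -> (size q <= n.+1)%N ->
  homog n q x != 0 ->
  ~ (bform_d0 (coefs n.+1 (lin x * q)) x.1 x.2 = 0 /\
     bform_d1 (coefs n.+1 (lin x * q)) x.1 x.2 = 0).
Proof.
case: x => u0 u1 /= x_neq0 size_q q_x_neq0 [d0_eq0 d1_eq0].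
have [u1_eq0|u1_neq0] := eqVneq u1 0.
  have u0_neq0 : u0 != 0 by apply: contraNneq x_neq0 => u0_eq0; rewrite u0_eq0 u1_eq0.
  move: q_x_neq0 d1_eq0; rewrite u1_eq0 homog_x1_eq0 bform_d1_x1_eq0 /lin /=.
  rewrite scale0r sub0r -polyCN coefCM -mulrA => /negbTE q_x_neq0 /eqP.
  by rewrite mulf_eq0 oppr_eq0 (negbTE u0_neq0) q_x_neq0.
have lin_root : (lin (u0, u1)).[u0 / u1] = 0.
  by rewrite /lin !hornerE /=; field.
have size_der : (size (lin (u0, u1) * q)^`()%R <= n.+1)%N.
  by apply: leq_trans (size_deriv_leq _) _; have := size_lin_mul (u0, u1) size_q; lia.
move: d0_eq0; rewrite bform_d0_homog homog_affine // derivM hornerD !hornerM lin_root.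
rewrite /lin derivB derivZ derivX derivC subr0 alg_polyC hornerC mul0r addr0 /=.
move: q_x_neq0; rewrite homog_affine // => /negbTE q_neq0 /eqP.
by move: q_neq0; rewrite !mulf_eq0 expf_eq0 (negbTE u1_neq0) /= => ->.
Qed.

Lemma fibre_form_nonsingular s x : x != (0, 0) -> x \in s ->
  count (same_fibre x) s = 1%N ->
  ~ (bform_d0 (coefs (size s) (fibre_form s)) x.1 x.2 = 0 /\
     bform_d1 (coefs (size s) (fibre_form s)) x.1 x.2 = 0).
Proof.
move=> x_neq0 x_in_s count_x; have s_perm := perm_to_rem x_in_s.
rewrite (perm_size s_perm) /fibre_form (perm_big _ s_perm) big_cons /=.
apply: lin_mul_nonsingular => //; first exact: size_fibre_form.
move: count_x; rewrite (permP s_perm) /= same_fibre_refl add1n => -[count_rem].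
by rewrite homog_fibre_form_eq0 has_count count_rem.
Qed.

Definition off_fibre x : k * k := if x.1 == 0 then (1, 0) else (0, 1).

Lemma same_fibre_off_fibre x : x != (0, 0) -> ~~ same_fibre x (off_fibre x).
Proof.
case: x => u0 u1 x_neq0; rewrite /off_fibre /same_fibre /=.
have [u0_eq0|u0_neq0] := eqVneq u0 0; rewrite ?mulr0 ?mulr1 //.
by move: x_neq0; rewrite u0_eq0 xpair_eqE eqxx eq_sym.
Qed.

Lemma homog_interpolation n r (x : 'I_r -> k * k) (t : 'I_r -> k) :
  (r <= n.+1)%N -> (forall i, x i != (0, 0)) ->
  (forall i j, i != j -> ~~ same_fibre (x i) (x j)) ->
  exists2 p : {poly k}, (size p <= n.+1)%N & forall j, homog n p (x j) = t j.
Proof.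
move=> le_r_n x_neq0 x_fibres.
have mem_others i j : (j \in rem i (enum 'I_r)) = (j != i).
  by rewrite mem_rem_uniq ?enum_uniq // inE mem_enum andbT.
pose others i := map x (rem i (enum 'I_r)).
have size_others i : (size (others i) <= n)%N.
  by rewrite size_map size_rem ?mem_enum // size_enum_ord; lia.
(* Lagrange interpolation: [Q i] vanishes at [x j] for [j != i] only. *)
pose Q i := fibre_form (pad n (off_fibre (x i)) (others i)).
have Q_neq0 i : homog n (Q i) (x i) != 0.
  rewrite homog_pad_eq0 ?same_fibre_off_fibre //.
  by apply/hasPn => _ /mapP [j j_in ->]; apply: x_fibres; rewrite eq_sym -mem_others.
have Q_eq0 i j : i != j -> homog n (Q i) (x j) = 0.
  move=> ij; apply/eqP; rewrite -{1}(size_pad (off_fibre (x i)) (size_others i)).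
  rewrite homog_fibre_form_eq0 has_cat; apply/orP; left; apply/hasP.
  by exists (x j); rewrite ?same_fibre_refl // map_f // mem_others eq_sym.
exists (\sum_i (t i / homog n (Q i) (x i)) *: Q i).
  apply: (big_ind (fun p => size p <= n.+1)%N) => [|p q|i _].
  - by rewrite size_poly0.
  - by move=> size_p size_q; rewrite (leq_trans (size_polyD _ _)) // geq_max size_p.
  - exact: leq_trans (size_scale_leq _ _) (size_fibre_form_pad _ (size_others i)).
move=> j; rewrite homog_sum (bigD1 j) //= big1 ?addr0 => [|i ij].
  by rewrite homogZ divfK.
by rewrite homogZ (Q_eq0 i j ij) mulr0.
Qed.

End BinaryForms.

Arguments coefs {k} n p.

Lemma exists_point_off_fibres (k : closedFieldType) (s : seq (k * k)) :
  exists2 w : k * k, w != (0, 0) &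
    forall z, z \in s -> z != (0, 0) -> ~~ same_fibre z w.
Proof.
pose slopes := [seq z.1 / z.2 | z <- s].
have [a a_fresh] : exists a, ~~ root (\prod_(c <- slopes) ('X - c%:P)) a.
  by apply/closed_nonrootP; rewrite monic_neq0 // monic_prod_XsubC.
exists (a, 1); first by rewrite xpair_eqE oner_eq0 andbF.
move=> [u0 u1] z_in z_neq0; rewrite /same_fibre /= mulr1.
have [u1_eq0|u1_neq0] := eqVneq u1 0.
  by rewrite u1_eq0 mul0r; apply: contra z_neq0 => /eqP ->; rewrite u1_eq0.
apply: contra a_fresh => /eqP u0_eq; rewrite root_prod_XsubC.
by apply/mapP; exists (u0, u1) => //=; rewrite u0_eq mulrAC divff ?mul1r.
Qed.

Section Construction.
Variables (k : fieldType) (e b r m : nat).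
Variables (Px Py : 'I_r -> k * k) (Phi : 'I_m -> k * k) (w : k * k).
Hypothesis Px_neq0 : forall i, Px i != (0, 0).
Hypothesis Px_fibres : forall i j, i != j -> ~~ same_fibre (Px i) (Px j).
Hypothesis Phi_fibres : forall l i, ~~ same_fibre (Phi l) (Px i).
Hypotheses (w_neq0 : w != (0, 0)) (Px_w : forall i, ~~ same_fibre (Px i) w)
  (Phi_w : forall l, ~~ same_fibre (Phi l) w).

Lemma count_fibre_Px (A : {pred 'I_r}) j :
  count (same_fibre (Px j)) [seq Px i | i in A] = (j \in A).
Proof.
rewrite count_map -[j \in A]mem_enum -(count_uniq_mem j (enum_uniq A)).
apply: eq_in_count => i _ /=; have [->|ij] := eqVneq i j; first exact: same_fibre_refl.
by rewrite (negbTE (Px_fibres _)) // eq_sym.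
Qed.

Definition vanishing_form n (A : {pred 'I_r}) :=
  fibre_form (pad n w [seq Px i | i in A]).

Section VanishingForm.
Variables (n : nat) (A : {pred 'I_r}).
Hypothesis card_A : (#|A| <= n)%N.

Let size_A : (size [seq Px i | i in A] <= n)%N.
Proof. by rewrite size_map -cardE. Qed.

Lemma size_vanishing_form : (size (vanishing_form n A) <= n.+1)%N.
Proof. exact: size_fibre_form_pad. Qed.

Lemma vanishing_form_neq0 : vanishing_form n A != 0.
Proof.
apply: fibre_form_neq0 => z; rewrite mem_cat => /orP [/mapP [i _ ->] //|].
by move/nseqP => [-> _].
Qed.

Lemma homog_vanishing_form_Px j :
  (homog n (vanishing_form n A) (Px j) == 0) = (j \in A).
Proof. by rewrite homog_pad_eq0 // has_count count_fibre_Px lt0b. Qed.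

Lemma homog_vanishing_form_Phi l : homog n (vanishing_form n A) (Phi l) != 0.
Proof.
by rewrite homog_pad_eq0 //; apply/hasPn => _ /mapP [i _ ->]; apply: Phi_fibres.
Qed.

Lemma vanishing_form_nonsingular j : j \in A ->
  ~ (bform_d0 (coefs n (vanishing_form n A)) (Px j).1 (Px j).2 = 0 /\
     bform_d1 (coefs n (vanishing_form n A)) (Px j).1 (Px j).2 = 0).
Proof.
move=> j_in_A.
have := fibre_form_nonsingular (s := pad n w [seq Px i | i in A]) (Px_neq0 j).
rewrite (size_pad w size_A); apply; first by rewrite mem_cat map_f ?mem_enum.
by rewrite count_cat count_fibre_Px j_in_A count_nseq (negbTE (Px_w j)).
Qed.

End VanishingForm.

Definition on_C0 : {set 'I_r} := [set i | (Py i).1 == 0].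

Definition smooth_transverse_section g h := [/\ nonzero_section g h,
  forall i, smooth_at (e := e) (b := b) g h (Px i) (Py i)
  & forall l, transverse_fibre g h (Phi l)].

Lemma smooth_transverse_few_on_C0 : (#|on_C0| <= b - e)%N -> (r <= b.+1)%N ->
  exists g h, smooth_transverse_section g h.
Proof.
move=> card_C0 le_r_b; pose H := vanishing_form (b - e) on_C0.
have H_Px j : (homog (b - e) H (Px j) == 0) = (j \in on_C0).
  exact: homog_vanishing_form_Px card_C0 j.
(* Off C_0 these values make the section vanish at [P_j]. *)
pose t j := if j \in on_C0 then 1 else - homog (b - e) H (Px j) * (Py j).2 / (Py j).1.
have [G _ G_Px] := homog_interpolation t le_r_b Px_neq0 Px_fibres.
exists (coefs b G), (coefs (b - e) H); split.
- by right; apply: coefs_neq0 (size_vanishing_form card_C0) (vanishing_form_neq0 _ _).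
- move=> j; rewrite /smooth_at /sec_eval /sec_dy0 /sec_dy1.
  rewrite -/(homog b G (Px j)) -/(homog (b - e) H (Px j)) G_Px /t.
  case: ifPn (H_Px j) => [C0_j /eqP H_Px_eq0|off_j H_Px_neq0].
  + rewrite inE in C0_j; split; first by rewrite (eqP C0_j) H_Px_eq0 mul0r mulr0 addr0.
    by case=> _ _ /eqP; rewrite oner_eq0.
  + rewrite inE in off_j; split; first by field.
    by case=> _ _ _ /eqP; rewrite H_Px_neq0.
- move=> l y _ _; rewrite /sec_dy1 -/(homog (b - e) H (Phi l)) xpair_eqE negb_and.
  by rewrite homog_vanishing_form_Phi ?orbT.
Qed.

Lemma smooth_transverse_many_on_C0 : (#|~: on_C0| <= b)%N ->
  exists g h, smooth_transverse_section g h.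
Proof.
move=> card_off; pose G := vanishing_form b (~: on_C0).
have [zero_h zero_d0 zero_d1] := @bform_const0 k (b - e).
exists (coefs b G), (fun _ => 0); split.
- by left; apply: coefs_neq0 (size_vanishing_form card_off) (vanishing_form_neq0 _ _).
- move=> j; rewrite /smooth_at /sec_eval /sec_dx0 /sec_dx1 /sec_dy0 -/(homog b G (Px j)).
  rewrite zero_h zero_d0 zero_d1 !mulr0 !addr0.
  have := homog_vanishing_form_Px card_off j; rewrite !inE.
  have [y0_eq0|y0_neq0] := eqVneq (Py j).1 0 => /= G_Px.
  + split; first by rewrite y0_eq0 mul0r.
    by case=> _ _ /eqP; rewrite G_Px.
  + have j_off : j \in ~: on_C0 by rewrite !inE.
    split; first by rewrite (eqP G_Px) mulr0.
    case=> /eqP + /eqP + _ _; rewrite !mulf_eq0 (negbTE y0_neq0) /= => /eqP d0 /eqP d1.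
    by apply: (vanishing_form_nonsingular card_off j_off); split.
- move=> l y _ _; rewrite /sec_dy0 -/(homog b G (Phi l)) xpair_eqE negb_and.
  by rewrite homog_vanishing_form_Phi.
Qed.

End Construction.

Theorem lemma4p1 (k : closedFieldType) (e b r m : nat)
    (Px Py : 'I_r -> k * k) (Phi : 'I_m -> k * k) :
  (e < b)%N ->
  (forall i, Px i != (0, 0)) -> (forall i, Py i != (0, 0)) ->
  (forall i j : 'I_r, i != j -> ~~ same_fibre (Px i) (Px j)) ->
  (forall l, Phi l != (0, 0)) ->
  (forall l i, ~~ same_fibre (Phi l) (Px i)) ->
  (2 * r <= h0_A e b)%N ->
  exists (g : 'I_b.+1 -> k) (h : 'I_(b - e).+1 -> k),
    [/\ nonzero_section g h,
        forall i, smooth_at g h (Px i) (Py i)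
      & forall l, transverse_fibre g h (Phi l)].
Proof.
move=> lt_e_b Px_neq0 _ Px_fibres Phi_neq0 Phi_fibres; rewrite /h0_A => dim_bound.
have [w w_neq0 w_off] :=
  exists_point_off_fibres ([seq Px i | i : 'I_r] ++ [seq Phi l | l : 'I_m]).
have Px_w i : ~~ same_fibre (Px i) w by apply: w_off; rewrite ?mem_cat ?map_f ?mem_enum.
have Phi_w l : ~~ same_fibre (Phi l) w.
  by apply: w_off; rewrite ?mem_cat ?map_f ?mem_enum ?orbT.
have card_split := cardsC (on_C0 Py); rewrite card_ord in card_split.
have [few_on_C0|many_on_C0] := leqP #|on_C0 Py| (b - e).
- by apply: (smooth_transverse_few_on_C0 _ _ _ w_neq0 Px_w Phi_w) => //; lia.
- by apply: (smooth_transverse_many_on_C0 e _ _ _ w_neq0 Px_w Phi_w) => //; lia.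
Qed.
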